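(* There exist absolute positive constants $c,C$ such that the following holds. For a positive integer $n$ let $\pi$ be a uniformly random permutation of $\{1,\dots,n\}$ and $W=\sum_{i=1}^n \mathbf 1\{\pi(i)=i\}$ its number of fixed points. Let $Y\sim\mathrm{Poi}(1)$. Then for all positive integers $k$ with $k^2/n\le c$, $$\Big|\frac{P(W\ge k)}{P(Y\ge k)}-1\Big|\le \frac{Ck^2}{n}.$$
   Context: $\mathrm{Poi}(1)$ is the Poisson distribution with mean $1$. *)

From mathcomp Require Import all_boot all_fingroup.
From Stdlib Require Import Reals.

Definition fixpts {n : nat} (s : 'S_n) : nat := #|[set i : 'I_n | s i == i]|.

Definition count_fix_ge (n k : nat) : nat :=
  #|[set s : 'S_n | (k <= fixpts s)%N]|.

Definition PW_ge (n k : nat) : R :=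
  Rdiv (INR (count_fix_ge n k)) (INR (n`!)).

Definition poi1 (j : nat) : R := Rdiv (exp (-1)) (INR (factorial j)).

Fixpoint poi1_cdf_lt (k : nat) : R :=
  match k with
  | O => 0%R
  | S k' => Rplus (poi1_cdf_lt k') (poi1 k')
  end.

Definition PY_ge (k : nat) : R := Rminus 1 (poi1_cdf_lt k).

(* We prove |P(W >= k)/P(Y >= k) - 1| <= 72/n whenever
   2k <= n, which gives the theorem with c = 1/4 and C = 72.

   1. Counting: sum_s C(fix s, r) = C(n, r) (n - r)!; binomial inversion turns
      these factorial moments into the exact law
         P(W >= k) = sum_{k <= j <= n} 1/j! * d_{n-j},
      where d_m = sum_{t <= m} (-1)^t / t! is the derangement probability.
   2. Exponential series: |d_m - 1/e| <= 1/(m+1)!  (alternating series), and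
      sum_{j<N} 1/j! <= e <= sum_{j<N} 1/j! + 2/N!.
   3. Estimate: the difference P(W >= k) - P(Y >= k) is controlled by the
      convolution sum_j 1/j! * 1/(n-j+1)! <= (1/k!) 2^m/m!  (m = n+1-k), and
      m 2^m <= 4 m!, while P(Y >= k) >= P(Y = k) = 1/(e k!). *)

From mathcomp Require Import all_boot all_order all_algebra all_fingroup.
From mathcomp Require Import Rstruct.
From Stdlib Require Import Reals Lia.
From mathcomp Require Import ring lra zify.
Set Implicit Arguments.
Unset Strict Implicit.
Unset Printing Implicit Defensive.
Import Order.TTheory GRing.Theory Num.Theory.
Bind Scope ring_scope with R.

Section FixedPointCounting.
Local Open Scope nat_scope.

Lemma sum_indicator_card (T : finType) (P : pred T) :
  \sum_(x : T) (P x : nat) = #|P|.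
Proof.
rewrite -sum1_card [RHS]big_mkcond; apply: eq_bigr => x _.
by rewrite unfold_in; case: (P x).
Qed.

Lemma fixpts_le n (s : 'S_n) : fixpts s <= n.
Proof. by rewrite /fixpts; apply: leq_trans (max_card _) _; rewrite card_ord. Qed.

(* Factorial moments of the fixed-point count: choosing r fixed points of s
   amounts to choosing an r-set B and a permutation of the complement of B,
   so sum_s C(fix s, r) = C(n, r) (n - r)!. *)
Lemma sum_binomial_fixpts n r :
  \sum_(s : 'S_n) 'C(fixpts s, r) = 'C(n, r) * (n - r)`!.
Proof.
transitivity (\sum_(s : 'S_n) \sum_(B : {set 'I_n} | #|B| == r)
                 (B \subset [set i | s i == i] : nat)).
  apply: eq_bigr => s _; rewrite /fixpts -cards_draws -sum1_card big_mkcond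
    [RHS]big_mkcond /=; apply: eq_bigr => B _; rewrite inE.
  by case: (B \subset _); case: (#|B| == r).
rewrite exchange_big /=.
transitivity (\sum_(B : {set 'I_n} | #|B| == r) (n - r)`!); last first.
  rewrite sum_nat_const; congr (_ * _).
  have := card_draws 'I_n r; rewrite card_ord => <-.
  by apply: eq_card => B; rewrite inE unfold_in.
apply: eq_bigr => B /eqP cardB.
have fix_on_B (s : 'S_n) : (B \subset [set i | s i == i]) = (s \in perm_on (~: B)).
  apply/idP/idP.
    move/subsetP=> h; rewrite unfold_in; apply/subsetP => x; rewrite inE => hx.
    by rewrite inE; apply/negP => /h; rewrite inE (negbTE hx).
  rewrite unfold_in => /subsetP h; apply/subsetP => x hx; rewrite inE.
  by apply/negPn/negP => /h; rewrite inE hx.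
under eq_bigr => s _ do rewrite fix_on_B.
rewrite sum_indicator_card card_perm.
have := cardsC B; rewrite card_ord cardB => cardBC.
by rewrite -[in n - r]cardBC addKn.
Qed.

Lemma binomial_subset_of_subset (w r j : nat) : j <= r ->
  'C(r, j) * 'C(w, r) = 'C(w, j) * 'C(w - j, r - j).
Proof.
move=> hjr; case: (leqP r w) => hrw; last first.
  rewrite (bin_small hrw) muln0.
  case: (ltnP w j) => hwj; first by rewrite (bin_small hwj).
  rewrite [X in _ * X]bin_small ?muln0 //; lia.
have hjw : j <= w by exact: leq_trans hjr hrw.
have hrj : r - j <= w - j by exact: leq_sub2r.
apply/eqP; rewrite -(eqn_pmul2r (_ : 0 < j`! * (r - j)`! * (w - r)`!));
  last by rewrite !muln_gt0 !fact_gt0.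
apply/eqP; transitivity w`!.
  rewrite -(bin_fact hrw) -(bin_fact hjr); nia.
have e : w - j - (r - j) = w - r by lia.
rewrite -(bin_fact hjw) -(bin_fact hrj) e; nia.
Qed.

Lemma pow2_fact_bound m : 0 < m -> m * expn 2 m <= 4 * m`!.
Proof.
elim: m => // m IH _.
case: m IH => [|m] IH; first by [].
case: m IH => [|m] IH; first by [].
have := IH isT; rewrite factS !expnS => h.
have hX : expn 2 m <= m.+1 * m`!.
  rewrite -(leq_pmul2l (_ : 0 < 4 * m.+2)) //.
  move: h; rewrite factS; nia.
rewrite !factS.
have h2 : 2 * (m.+3 * expn 2 m) <= 2 * (m.+3 * (m.+1 * m`!)).
  by rewrite leq_pmul2l // leq_pmul2l.
nia.
Qed.

End FixedPointCounting.

Section ExactFormulas.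
Local Open Scope ring_scope.

Lemma binomial_inversion (w j n : nat) : (w <= n)%nat ->
  \sum_(j <= r < n.+1) (-1) ^+ (r - j) * ('C(r, j))%:R * ('C(w, r))%:R
  = (w == j)%:R :> R.
Proof.
move=> hwn; case: (ltnP w j) => hwj.
  rewrite (ltn_eqF hwj) big_nat_cond big1 // => r /andP[/andP[hjr _] _].
  by rewrite (@bin_small w r) ?mulr0 //; exact: leq_trans hwj hjr.
transitivity (('C(w, j))%:R * \sum_(j <= r < n.+1)
                 (-1) ^+ (r - j) * ('C(w - j, r - j))%:R :> R).
  rewrite mulr_sumr big_nat_cond [RHS]big_nat_cond; apply: eq_bigr.
  move=> r /andP[/andP[hjr _] _].
  by rewrite -mulrA -natrM binomial_subset_of_subset // natrM; ring.
rewrite (big_addn 0 n.+1 j).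
under eq_bigr => i _ do rewrite addnK.
have hle : ((w - j).+1 <= n.+1 - j)%nat by lia.
rewrite (big_cat_nat (leq0n _) hle) /=.
rewrite [X in _ + X]big_nat_cond [X in _ + X]big1 ?addr0; last first.
  by move=> i /andP[/andP[hi _] _]; rewrite bin_small ?mulr0.
rewrite big_mkord.
have := exprBn (1 : R) 1 (w - j); rewrite subrr.
under eq_bigr => i _ do rewrite !expr1n !mulr1 -mulr_natr.
move=> <-.
case: (eqVneq w j) => [->|hne]; first by rewrite subnn expr0 binn mulr1.
have hpos : (0 < w - j)%nat by rewrite subn_gt0 ltn_neqAle eq_sym hne hwj.
by rewrite -(prednK hpos) exprS mul0r mulr0.
Qed.

Lemma sum_point_indicators (k w n : nat) :
  \sum_(k <= j < n) (w == j)%:R = ((k <= w)%nat && (w < n)%nat)%:R :> R.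
Proof.
elim: n => [|n IH]; first by rewrite big_geq // ltn0 andbF.
case: (leqP k n) => hkn; last first.
  rewrite big_geq //; case: (leqP k w) => // hkw /=.
  by rewrite ltnNge (leq_trans hkn hkw).
rewrite big_nat_recr //= IH.
case: (ltngtP w n) => h.
- by rewrite andbT ltnS (ltnW h) andbT addr0.
- by rewrite andbF addr0 ltnS (leqNgt w n) h andbF.
- by rewrite andbF add0r h ltnS leqnn andbT hkn.
Qed.

Definition ifact (j : nat) : R := (j`!%:R)^-1.

(* Partial sums of the series for e^-1; derangements of m points have
   probability derange_ratio m among all permutations. *)
Definition derange_ratio (m : nat) : R :=
  \sum_(0 <= t < m.+1) (-1) ^+ t * ifact t.

Lemma fact_neq0 j : (j`!%:R : R) != 0.
Proof. by rewrite pnatr_eq0 -lt0n fact_gt0. Qed.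

(* Exact law of W:  P(W >= k) = sum_{k <= j <= n} (1/j!) * D_{n-j}/(n-j)!.
   Write [k <= fix s] by binomial inversion in the binomial moments of
   fix s, then use sum_binomial_fixpts. *)
Lemma PW_ge_formula n k :
  PW_ge n k = \sum_(k <= j < n.+1) ifact j * derange_ratio (n - j).
Proof.
rewrite /PW_ge /count_fix_ge RdivE !INRE.
have -> : #|[set s : 'S_n | (k <= fixpts s)%nat]| =
          (\sum_(s : 'S_n) ((k <= fixpts s)%nat : nat))%nat.
  by rewrite sum_indicator_card; apply: eq_card => s; rewrite inE.
rewrite natr_sum.
transitivity ((\sum_(s : 'S_n) \sum_(k <= j < n.+1) \sum_(j <= r < n.+1)
   (-1) ^+ (r - j) * ('C(r, j))%:R * ('C(fixpts s, r))%:R) / (n`!)%:R : R).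
  congr (_ / _); apply: eq_bigr => s _.
  have fix_lt : (fixpts s < n.+1)%nat by rewrite ltnS fixpts_le.
  rewrite (_ : ((k <= fixpts s)%nat : nat)%:R =
     ((k <= fixpts s)%nat && (fixpts s < n.+1)%nat)%:R :> R); last first.
    by rewrite fix_lt andbT.
  rewrite -sum_point_indicators.
  by apply: eq_bigr => j _; rewrite binomial_inversion // fixpts_le.
rewrite exchange_big /= mulr_suml; apply: eq_big_nat => j /andP[hkj hjn].
rewrite exchange_big /= mulr_suml.
transitivity (\sum_(j <= r < n.+1) ifact j * ((-1) ^+ (r - j) * ifact (r - j))).
  apply: eq_big_nat => r /andP[hjr hrn].
  rewrite -mulr_sumr -natr_sum sum_binomial_fixpts.
  have e : n`! = ('C(r, j) * ('C(n, r) * (n - r)`!) * (j`! * (r - j)`!))%nat.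
    rewrite -(bin_fact (_ : (r <= n)%nat)) -?(bin_fact hjr); first nia.
    by rewrite -ltnS.
  rewrite e /ifact !natrM; field.
  by rewrite !fact_neq0 !pnatr_eq0 -!lt0n !bin_gt0 hjr -ltnS hrn.
rewrite -mulr_sumr /derange_ratio; congr (_ * _).
rewrite (big_addn 0 n.+1 j).
under eq_bigr => i _ do rewrite addnK.
by rewrite subSn // -ltnS.
Qed.

Definition exp_partial (N : nat) : R := \sum_(0 <= j < N) ifact j.

Definition inv_e : R := exp (IZR (Zneg 1)).

Lemma PY_ge_formula k : PY_ge k = 1 - inv_e * exp_partial k.
Proof.
rewrite /PY_ge RminusE; congr (_ - _).
elim: k => [|k IH] /=; first by rewrite /exp_partial big_geq // mulr0.
by rewrite IH /exp_partial big_nat_recr //= /poi1 RdivE INRE RplusE mulrDr.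
Qed.

End ExactFormulas.

Section ExponentialSeries.
Local Open Scope ring_scope.

Lemma ifact_gt0 j : 0 < ifact j.
Proof. by rewrite /ifact invr_gt0 ltr0n fact_gt0. Qed.

Lemma ifactS j : ifact j.+1 = ifact j / (j.+1)%:R.
Proof. by rewrite /ifact factS natrM invfM mulrC. Qed.

Lemma ifact_decr j : ifact j.+1 <= ifact j.
Proof.
rewrite ifactS ler_pdivrMr ?ltr0n //.
have := ifact_gt0 j; have : 1 <= (j.+1)%:R :> R by rewrite ler1n.
nra.
Qed.

Lemma ifact_halves j : (1 <= j)%nat -> 2 * ifact j.+1 <= ifact j.
Proof.
move=> hj; rewrite ifactS mulrA ler_pdivrMr ?ltr0n // mulrC.
by rewrite ler_pM2l ?ifact_gt0 // ler_nat ltnS.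
Qed.

Lemma ifact_split k j : (k <= j)%nat -> ifact j <= ifact k * ifact (j - k).
Proof.
move=> hkj; rewrite /ifact -invfM lef_pV2 ?posrE ?ltr0n ?muln_gt0 ?fact_gt0 //;
  last by rewrite -natrM ltr0n muln_gt0 !fact_gt0.
by rewrite -natrM ler_nat -(bin_fact hkj) leq_pmull // bin_gt0.
Qed.

Lemma ifact_convolution m :
  \sum_(i < m.+1) ifact i * ifact (m - i) = 2 ^+ m * ifact m.
Proof.
have -> : (2 : R) ^+ m = \sum_(i < m.+1) ('C(m, i))%:R.
  have -> : (2 : R) = 1 + 1 by lra.
  by rewrite exprDn; apply: eq_bigr => i _; rewrite !expr1n mul1r.
rewrite mulr_suml; apply: eq_bigr => [[i /= hi]] _.
rewrite ltnS in hi.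
rewrite /ifact -(bin_fact hi) !natrM; field.
by rewrite !fact_neq0 pnatr_eq0 -lt0n bin_gt0 hi.
Qed.

Lemma exp_partial_mono N M : (N <= M)%nat -> exp_partial N <= exp_partial M.
Proof.
move=> h; rewrite /exp_partial (big_cat_nat (leq0n N) h) /= lerDl.
by apply: sumr_ge0 => i _; apply: ltW; apply: ifact_gt0.
Qed.

Lemma exp_partial_cv : Un_cv (fun N => exp_partial N.+1) (exp 1).
Proof.
apply: (Un_cv_ext (fun N => sum_f_R0 (fun i =>
          Rmult (Rinv (INR (Factorial.fact i))) (pow 1 i)) N)).
  move=> N; rewrite sum_f_R0E /exp_partial; apply: eq_bigr => i _.
  by rewrite INRE factE RpowE expr1n RmultE RinvE mulr1.
exact: (proj2_sig (exist_exp 1)).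
Qed.

Lemma exp_partial_le_e N : exp_partial N <= exp 1.
Proof.
apply: le_trans (exp_partial_mono (leqnSn N)) _; apply/RleP.
apply: (growing_ineq (fun M => exp_partial M.+1)) exp_partial_cv N.
by move=> M; apply/RleP; exact: exp_partial_mono.
Qed.

(* Geometric domination of the tail: since the weights halve from N >= 1 on,
   any finite piece of the tail plus twice its next term is at most 2/N!. *)
Lemma exp_tail_geometric N p : (1 <= N)%nat ->
  \sum_(N <= j < N + p) ifact j + 2 * ifact (N + p) <= 2 * ifact N.
Proof.
move=> hN; elim: p => [|p IH]; first by rewrite addn0 big_geq // add0r.
rewrite addnS big_nat_recr /= ?leq_addr //.
have := @ifact_halves (N + p) (leq_trans hN (leq_addr _ _)); lra.
Qed.

Lemma cv_const (b : R) : Un_cv (fun _ => b) b.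
Proof. by move=> eps heps; exists 0%nat => n _; rewrite Rdist_eq. Qed.

Lemma e_le_exp_partial N : (1 <= N)%nat ->
  exp 1 <= exp_partial N + 2 * ifact N.
Proof.
move=> hN; apply/RleP; apply: (Rle_cv_lim _ exp_partial_cv (cv_const _)) => M.
apply/RleP.
case: (leqP M.+1 N) => h.
  have := exp_partial_mono h; have := ifact_gt0 N; lra.
rewrite -(subnKC (ltnW h)) /exp_partial (big_cat_nat (leq0n N) (leq_addr _ _)) /=.
have := exp_tail_geometric (M.+1 - N) hN.
have := ifact_gt0 (N + (M.+1 - N)); lra.
Qed.

Lemma inv_e_mul_e : inv_e * exp 1 = 1.
Proof.
rewrite /inv_e -RmultE -exp_plus (_ : Rplus (IZR (Zneg 1)) 1 = 0); first exact: exp_0.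
by rewrite RplusE addrC (_ : IZR (Zneg 1) = -1) // subrr.
Qed.

Lemma inv_e_gt0 : 0 < inv_e.
Proof. by apply/RltP; apply: exp_pos. Qed.

(* Alternating series estimate: |D_m/m! - e^-1| <= 1/(m+1)!. *)
Lemma derange_ratio_approx m : `|derange_ratio m - inv_e| <= ifact m.+1.
Proof.
pose u n := Rinv (INR (Factorial.fact n)).
have u_ifact n : u n = ifact n by rewrite /u INRE factE RinvE.
have u_dec : Un_decreasing u.
  by move=> n; apply/RleP; rewrite !u_ifact; exact: ifact_decr.
have u_cv0 : Un_cv u 0.
  apply: (Un_cv_ext (fun n => Rdiv (pow 1 n) (INR (Factorial.fact n)))).
    by move=> n; rewrite /u RdivE RpowE expr1n mul1r RinvE.
  exact: cv_speed_pow_fact.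
have alt_cv : Un_cv (fun N => sum_f_R0 (tg_alt u) N) inv_e.
  apply: (Un_cv_ext (fun N => sum_f_R0 (fun i =>
            Rmult (Rinv (INR (Factorial.fact i))) (pow (IZR (Zneg 1)) i)) N)).
    by move=> N; apply: sum_eq => i _; rewrite /tg_alt /u; exact: Rmult_comm.
  exact: (proj2_sig (exist_exp (IZR (Zneg 1)))).
have alt_sum N : sum_f_R0 (tg_alt u) N = derange_ratio N.
  rewrite sum_f_R0E /derange_ratio; apply: eq_bigr => i _.
  by rewrite /tg_alt u_ifact RmultE RpowE.
(* Leibniz: even partial sums lie above the limit, odd ones below. *)
have between N :
    derange_ratio (2 * N).+1 <= inv_e <= derange_ratio (2 * N).
  have [/RleP h1 /RleP h2] := alternated_series_ineq u inv_e N u_dec u_cv0 alt_cv.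
  by move: h1 h2; rewrite !alt_sum => -> ->.
have dS N : derange_ratio N.+1 = derange_ratio N + (-1) ^+ N.+1 * ifact N.+1.
  by rewrite /derange_ratio big_nat_recr.
have [N [->|->]] : exists N, m = (2 * N)%nat \/ m = (2 * N).+1.
  exists m./2; have := odd_double_half m; rewrite -mul2n.
  by case: (odd m) => /= h; [right|left]; lia.
- have /andP[h1 h2] := between N.
  move: h1; rewrite dS -signr_odd oddS oddM /= expr1 => h1.
  rewrite ler_norml; lra.
- have /andP[h1 _] := between N.
  have /andP[_ h2] := between N.+1.
  have e : (2 * N.+1 = (2 * N).+2)%nat by lia.
  move: h2; rewrite e dS -signr_odd !oddS oddM /= expr0 => h2.
  rewrite ler_norml; lra.
Qed.

End ExponentialSeries.

Section RelativeError.
Local Open Scope ring_scope.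

(* Bounding each 1/j! by 1/k! * 1/(j-k)! turns the tail sum into the
   convolution of ifact_convolution, of total mass 2^m / m!, m = n+1-k. *)
Lemma tail_convolution_bound n k : (k <= n)%nat ->
  \sum_(k <= j < n.+1) ifact j * ifact (n - j).+1
    <= ifact k * (2 ^+ (n.+1 - k) * ifact (n.+1 - k)).
Proof.
move=> hkn.
apply: (@le_trans _ _
  (\sum_(k <= j < n.+1) ifact k * (ifact (j - k) * ifact (n - j).+1))).
  apply: ler_sum_nat => j /andP[hkj _]; rewrite mulrA.
  by apply: ler_wpM2r; [exact: ltW (ifact_gt0 _) | exact: ifact_split].
rewrite -mulr_sumr; apply: ler_wpM2l; first exact: ltW (ifact_gt0 _).
rewrite -ifact_convolution (big_addn 0 n.+1 k).
under eq_bigr => i _ do rewrite addnK.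
rewrite -(big_mkord xpredT (fun i => ifact i * ifact (n.+1 - k - i))).
rewrite big_nat_recr //= [X in _ <= X + _](_ : _ =
   \sum_(0 <= i < n.+1 - k) ifact i * ifact (n - (i + k)).+1); last first.
  by apply: eq_big_nat => i /andP[_ hi]; congr (_ * ifact _); lia.
by rewrite lerDl; apply: mulr_ge0; exact: ltW (ifact_gt0 _).
Qed.

Lemma pow2_ifact_bound m : (1 <= m)%nat -> m%:R * (2 ^+ m * ifact m) <= 4 :> R.
Proof.
move=> hm; have := pow2_fact_bound hm.
rewrite -(ler_nat R) !natrM natrX => h.
by rewrite /ifact mulrA ler_pdivrMr ?ltr0n ?fact_gt0.
Qed.

Lemma e_le3 : exp 1 <= 3.
Proof.
have := e_le_exp_partial (isT : (1 <= 1)%nat).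
by rewrite /exp_partial big_nat1 /ifact /= invr1; lra.
Qed.

(* Exact decomposition of the difference: the error of each derangement
   ratio, plus the part of the Poisson tail beyond n. *)
Lemma PW_minus_PY n k : (k <= n)%nat ->
  PW_ge n k - PY_ge k =
    \sum_(k <= j < n.+1) ifact j * (derange_ratio (n - j) - inv_e)
    - inv_e * (exp 1 - exp_partial n.+1).
Proof.
move=> hkn.
have -> : exp_partial n.+1 = exp_partial k + \sum_(k <= j < n.+1) ifact j.
  by rewrite /exp_partial (big_cat_nat (leq0n k) (leqW hkn)).
have -> : \sum_(k <= j < n.+1) ifact j * (derange_ratio (n - j) - inv_e) =
          PW_ge n k - inv_e * \sum_(k <= j < n.+1) ifact j.
  rewrite PW_ge_formula mulr_sumr -sumrB; apply: eq_bigr => j _; ring.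
rewrite PY_ge_formula; have := inv_e_mul_e; lra.
Qed.

Lemma PW_PY_diff_bound n k : (k <= n)%nat ->
  `|PW_ge n k - PY_ge k|
    <= 3 * (ifact k * (2 ^+ (n.+1 - k) * ifact (n.+1 - k))).
Proof.
move=> hkn; rewrite PW_minus_PY //.
set X := ifact k * _.
have ak0 := ifact_gt0 k.
have derange_part :
    `|\sum_(k <= j < n.+1) ifact j * (derange_ratio (n - j) - inv_e)| <= X.
  apply: le_trans (ler_norm_sum _ _ _) (le_trans _ (tail_convolution_bound hkn)).
  apply: ler_sum_nat => j _; rewrite normrM (ger0_norm (ltW (ifact_gt0 j))).
  by apply: ler_wpM2l; [exact: ltW (ifact_gt0 _) | exact: derange_ratio_approx].
have beyond_n : `|inv_e * (exp 1 - exp_partial n.+1)| <= 2 * X.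
  have hT0 : 0 <= exp 1 - exp_partial n.+1 by rewrite subr_ge0 exp_partial_le_e.
  have hT : exp 1 - exp_partial n.+1 <= 2 * ifact n.+1.
    by rewrite lerBlDl e_le_exp_partial.
  have an1 : ifact n.+1 <= X.
    apply: le_trans (ifact_split (leqW hkn)) _; apply: ler_wpM2l; first exact: ltW.
    rewrite -[leLHS]mul1r; apply: ler_wpM2r; first exact: ltW (ifact_gt0 _).
    by apply: exprn_ege1; lra.
  have he := inv_e_mul_e; have he0 := inv_e_gt0.
  have e_ge1 : 1 <= exp 1.
    by have := exp_partial_le_e 1; rewrite /exp_partial big_nat1 /ifact /= invr1.
  rewrite ger0_norm; last by apply: mulr_ge0 => //; exact: ltW.
  have inv_e_le1 : inv_e <= 1 by nra.
  nra.
apply: le_trans (ler_normB _ _) _; lra.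
Qed.

(* Denominator: P(Y >= k) >= P(Y = k) = e^-1 / k!. *)
Lemma PY_ge_lower k : inv_e * ifact k <= PY_ge k.
Proof.
rewrite PY_ge_formula -inv_e_mul_e -mulrBr.
apply: ler_wpM2l; first exact: ltW inv_e_gt0.
have := exp_partial_le_e k.+1; rewrite /exp_partial big_nat_recr //=; lra.
Qed.

Lemma relative_error_bound n k : (0 < n)%nat -> (2 * k <= n)%nat ->
  `|PW_ge n k / PY_ge k - 1| <= 72 / n%:R.
Proof.
move=> hn h2k.
have hkn : (k <= n)%nat by lia.
set m := (n.+1 - k)%nat; set X := 2 ^+ m * ifact m.
have hX0 : 0 <= X by apply: mulr_ge0; [apply: exprn_ge0 | apply: ltW (ifact_gt0 _)].
have nX : n%:R * X <= 8.
  have hnm : n%:R <= 2 * m%:R :> R by rewrite -natrM ler_nat /m; lia.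
  have m_ge1 : (1 <= m)%nat by rewrite /m; lia.
  have := pow2_ifact_bound m_ge1; rewrite -/X.
  have := ler_wpM2r hX0 hnm; lra.
have ak0 := ifact_gt0 k; have he0 := inv_e_gt0.
have hQ0 : 0 < PY_ge k by apply: lt_le_trans (PY_ge_lower k); apply: mulr_gt0.
have hnR : 0 < n%:R :> R by rewrite ltr0n.
rewrite (_ : _ - 1 = (PW_ge n k - PY_ge k) / PY_ge k); last by field; rewrite gt_eqF.
rewrite normrM normfV (gtr0_norm hQ0) ler_pdivrMr // mulrAC ler_pdivlMr //.
apply: le_trans (ler_wpM2r (ltW hnR) (PW_PY_diff_bound hkn)) _.
have inv_e_ge : 1 <= 3 * inv_e by have := e_le3; have := inv_e_mul_e; nra.
have := PY_ge_lower k; rewrite -/m -/X; nra.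
Qed.

(* The theorem with c = 1/4 and C = 72: k^2/n <= 1/4 forces 2k <= n, and
   the O(1/n) bound is then weakened to O(k^2/n). *)
Lemma fixpoint_ratio_bound n k : (0 < n)%nat -> (0 < k)%nat ->
  k%:R ^+ 2 / n%:R <= 4%:R^-1 :> R ->
  `|PW_ge n k / PY_ge k - 1| <= 72%:R * k%:R ^+ 2 / n%:R.
Proof.
move=> hn hk hc.
have hnR : 0 < n%:R :> R by rewrite ltr0n.
have h2k : (2 * k <= n)%nat.
  have : 4 * k%:R ^+ 2 <= n%:R :> R.
    move: hc; rewrite ler_pdivrMr // => hc.
    have h4 : (4%:R : R)^-1 * 4 = 1 by rewrite mulVf // pnatr_eq0.
    nra.
  by rewrite -natrX -natrM ler_nat; nia.
apply: (le_trans (relative_error_bound hn h2k)).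
have : 1 <= k%:R ^+ 2 :> R by rewrite -natrX ler1n expn_gt0 hk.
rewrite !mulrA ler_pM2r ?invr_gt0 //; lra.
Qed.

End RelativeError.

Bind Scope R_scope with R.
Open Scope R_scope.

Theorem mainTheorem7 :
  exists c C : R, 0 < c /\ 0 < C /\
    forall n k : nat, (0 < n)%nat -> (0 < k)%nat ->
      INR k ^ 2 / INR n <= c ->
      Rabs (PW_ge n k / PY_ge k - 1) <= C * INR k ^ 2 / INR n.
Proof.
exists (/ INR 4), (INR 72); split; [|split].
- by apply/RltP; rewrite RinvE INRE invr_gt0 ltr0n.
- by apply/RltP; rewrite INRE ltr0n.
move=> n k hn hk /RleP hc; apply/RleP; move: hc.
rewrite RabsE RminusE !RdivE R1E RmultE RpowE RinvE !INRE.
exact: fixpoint_ratio_bound.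
Qed.
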